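(* Let $\beta\in\mathbb{F}_{p^m}\setminus\{0\}$ and let $\mathcal{C}=\left\langle\left(x^2+\gamma x+\frac{\gamma^2}{2}\right)^i\left(x^2-\gamma x+\frac{\gamma^2}{2}\right)^j\right\rangle$, $0\le i,j\le 2p^s$, be an $(\alpha+\beta u)$-constacyclic code of length $4p^s$ over $R$. Then its dual code, viewed as an ideal of $R[x]/\langle x^{4p^s}-(\alpha+\beta u)^{-1}\rangle$, is $$\mathcal{C}^{\perp}=\left\langle\left(x^2+2\gamma^{-1}x+\tfrac{2}{\gamma^2}\right)^{2p^s-i}\left(x^2-2\gamma^{-1}x+\tfrac{2}{\gamma^2}\right)^{2p^s-j}\right\rangle.$$
   Context: Let $p$ be an odd prime and $m,s$ positive integers with $p^m\equiv 3\pmod 4$; $\mathbb{F}_{p^m}$ is the field with $p^m$ elements and $R=\mathbb{F}_{p^m}[u]/\langle u^2\rangle$. Fix $\alpha\in\mathbb{F}_{p^m}\setminus\{0\}$ that is not a square in $\mathbb{F}_{p^m}$, let $\alpha_0\in\mathbb{F}_{p^m}$ satisfy $\alpha_0^{p^s}=\alpha$, and let $\gamma\in\mathbb{F}_{p^m}$ satisfy $\gamma^4+4\alpha_0=0$. A $\lambda$-constacyclic code of length $n$ over $R$ ($\lambda$ a unit) is identified with an ideal of $R[x]/\langle x^n-\lambda\rangle$ via $(c_0,\dots,c_{n-1})\mapsto\sum c_ix^i$. The dual code is $\mathcal{C}^\perp=\{a\in R^n: \sum_k a_kc_k=0\ \forall c\in\mathcal{C}\}$, which is a $\lambda^{-1}$-constacyclic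 code and hence identified with an ideal of $R[x]/\langle x^n-\lambda^{-1}\rangle$. *)

From HB Require Import structures.
From mathcomp Require Import all_boot all_order all_algebra all_field.
Set Implicit Arguments. Unset Strict Implicit. Unset Printing Implicit Defensive.
Import GRing.Theory.
Local Open Scope ring_scope.

(* R = F[u]/<u^2>: elements a + b u represented as pairs (a, b). *)
Section DualNumbers.
Variable F : fieldType.
Definition dualnum : Type := (F * F)%type.
HB.instance Definition _ := GRing.Zmodule.copy dualnum (F * F)%type.
Definition dmul (x y : dualnum) : dualnum := (x.1 * y.1, x.1 * y.2 + x.2 * y.1).
Definition done : dualnum := (1, 0).
Lemma dmulA : associative dmul.
Proof. by move=> [a b] [c d] [e f]; rewrite /dmul /=; congr pair; rewrite ?mulrA // !mulrDr !mulrDl !mulrA addrA. Qed.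
Lemma dmulC : commutative dmul.
Proof. by move=> [a b] [c d]; rewrite /dmul /= mulrC [b * c]mulrC [a * d]mulrC addrC. Qed.
Lemma dmul1 : left_id done dmul.
Proof. by move=> [a b]; rewrite /dmul /= mul1r mul0r addr0 mul1r. Qed.
Lemma dmulDl : left_distributive dmul +%R.
Proof. by move=> [a b] [c d] [e f]; rewrite /dmul /= mulrDl; congr pair; rewrite !mulrDl addrACA. Qed.
Lemma done_neq0 : done != 0.
Proof. by apply/negP => /eqP [] /eqP; rewrite oner_eq0. Qed.
HB.instance Definition _ := GRing.Zmodule_isComNzRing.Build dualnum dmulA dmulC dmul1 dmulDl done_neq0.
Definition dn (a b : F) : dualnum := (a, b).
End DualNumbers.

Definition dconst (F : fieldType) (a : F) : dualnum F := (a, 0).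

Definition word_poly (R : nzRingType) (n : nat) (c : 'rV[R]_n) : {poly R} :=
  \sum_(k < n) c 0 k *: 'X^k.

(* The lambda-constacyclic code of length n identified with the ideal <g> of
   R[x]/<x^n - lambda>: the words whose polynomial (of degree < n, i.e. the
   canonical representative of its residue class) is congruent to a multiple
   of g modulo x^n - lambda. *)
Definition constacyclic_ideal (R : nzRingType) (n : nat) (lam : R) (g : {poly R})
  : 'rV[R]_n -> Prop :=
  fun c => exists f h : {poly R}, word_poly c = f * g + h * ('X^n - lam%:P).

Definition dual_code (R : nzRingType) (n : nat) (C : 'rV[R]_n -> Prop)
  : 'rV[R]_n -> Prop :=
  fun a => forall c, C c -> \sum_(k < n) a 0 k * c 0 k = 0.

(* Put [n = 4 p^s] and [T = x^n - alpha].  Modulo [x^n - (alpha + beta u)] one has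
   [u = beta^-1 T] and [u^2 = 0], so [R[x]/<x^n - lambda>] is [F[x]/<T^2>] and a code
   [<g>] with [g * g' = T^2] is the ideal [g F[x]/<T^2>].  Both components of the
   inner product of words [a] and [c] are coefficients of [x^(n-1)] in products of
   the components of [c] with the reciprocals of those of [a]; comparing degrees
   modulo [T^2] shows that [a] is orthogonal to [<g>] iff [g'] divides a polynomial
   [K(a)] which is, up to reversal, the image of [a] in
   [F[x]/<(x^n - alpha^-1)^2>], i.e. in [R[x]/<x^n - lambda^-1>].  Hence the dual is
   generated by the reciprocal of [g'].  Finally
   [(x^2 + gamma x + gamma^2/2)(x^2 - gamma x + gamma^2/2) = x^4 - alpha0] and the
   Frobenius give [T = (x^4 - alpha0)^(p^s)], so [g'] has exponents [2p^s - i] and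
   [2p^s - j], and the reciprocal of [x^2 +- gamma x + gamma^2/2] is a scalar multiple
   of [x^2 +- (2/gamma) x + 2/gamma^2]. *)

From HB Require Import structures.
From mathcomp Require Import all_boot all_order all_algebra all_field.
From mathcomp Require Import zify ring.
Import GRing.Theory.
Local Open Scope ring_scope.

Set Implicit Arguments. Unset Strict Implicit. Unset Printing Implicit Defensive.

Lemma size_polyD_le (R : nzRingType) (p q : {poly R}) k :
  (size p <= k)%N -> (size q <= k)%N -> (size (p + q)%R <= k)%N.
Proof. by move=> sp sq; apply: leq_trans (size_polyD _ _) _; rewrite geq_max sp. Qed.

Lemma size_polyCM_le (R : nzRingType) (c : R) (p : {poly R}) :
  (size (c%:P * p)%R <= size p)%N.
Proof. by rewrite mul_polyC size_scale_leq. Qed.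

Lemma size_mul_le (R : nzRingType) (p q : {poly R}) x y :
  (size p <= x)%N -> (size q <= y)%N -> (size (p * q)%R <= (x + y).-1)%N.
Proof.
move=> hp hq; apply: leq_trans (size_polyMleq _ _) _.
by rewrite -!subn1 leq_sub2r // leq_add.
Qed.

Lemma size_le_pred (R : nzRingType) n (r : {poly R}) :
  (size r <= n)%N -> r`_n.-1 = 0 -> (size r <= n.-1)%N.
Proof.
move=> sr rn; apply/leq_sizeP => j hj; have [->|jn] := eqVneq j n.-1; first by [].
by rewrite nth_default //; apply: leq_trans sr _; lia.
Qed.

Lemma dvdp_modpB (F : fieldType) (p d : {poly F}) : d %| p %% d - p.
Proof. by rewrite {2}(divp_eq p d) opprD addrCA subrr addr0 dvdpNr dvdp_mull. Qed.

Lemma Xn_subp_ndvdp (F : fieldType) (M W V : {poly F}) N :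
  size M = N.+1 -> W != 0 -> (size W <= N)%N -> (size V < N)%N ->
  ~~ (M %| 'X^(N - size W) * W - V).
Proof.
move=> sM Wn0 sW sV; have sXW : size ('X^(N - size W) * W) = N.
  by rewrite mulrC size_mulXn // subnK.
have dn0 : 'X^(N - size W) * W - V != 0.
  by apply: contraTneq sV => /eqP; rewrite subr_eq0 => /eqP <-; rewrite sXW ltnn.
apply: contra (dvdp_leq dn0) _; rewrite sM -ltnNge ltnS.
by apply: leq_trans (size_polyD _ _) _; rewrite size_polyN sXW geq_max leqnn ltnW.
Qed.

Section Reversal.
Variable R : nzRingType.
Implicit Types p q : {poly R}.

(* [revp N p] is [x^(N-1) p(1/x)] when [size p <= N]; higher coefficients are dropped. *)
Definition revp (N : nat) p : {poly R} := \poly_(j < N) p`_(N.-1 - j).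

Lemma coef_revp N p j : (revp N p)`_j = if (j < N)%N then p`_(N.-1 - j) else 0.
Proof. by rewrite coef_poly. Qed.

Lemma size_revp N p : (size (revp N p) <= N)%N.
Proof. exact: size_poly. Qed.

Lemma revp0 N : revp N 0 = 0.
Proof. by apply/polyP=> j; rewrite coef_revp !coef0; case: ifP. Qed.

Lemma revpD N p q : revp N (p + q) = revp N p + revp N q.
Proof. by apply/polyP=> j; rewrite coefD !coef_revp coefD; case: ifP; rewrite ?addr0. Qed.

Lemma revpZ N c p : revp N (c *: p) = c *: revp N p.
Proof. by apply/polyP=> j; rewrite coefZ !coef_revp coefZ; case: ifP; rewrite ?mulr0. Qed.

Lemma revpK N p : (size p <= N)%N -> revp N (revp N p) = p.
Proof.
move=> sp; apply/polyP=> j; rewrite !coef_revp.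
case: ifP => jN; first by rewrite ifT; [congr (p`_ _) | ]; lia.
by rewrite nth_default //; apply: leq_trans sp _; lia.
Qed.

Lemma revp_XnM N1 N2 i q : (i < N1)%N -> (size q <= N2)%N ->
  revp (N1 + N2).-1 ('X^i * q) = 'X^(N1.-1 - i) * revp N2 q.
Proof.
move=> iN sq; apply/polyP=> j; rewrite coef_revp !coefXnM coef_revp.
case: (ltnP j (N1 + N2).-1) => j1.
  case: (ltnP ((N1 + N2).-1.-1 - j) i) => j2.
    by rewrite ifF; [rewrite ifF //|]; apply/negbTE; lia.
  case: (ltnP j (N1.-1 - i)) => j3.
    by rewrite nth_default //; apply: leq_trans sq _; lia.
  by rewrite ifT; [congr (q`_ _) | ]; lia.
case: ifP => // j3; case: ifP => // j4.
by rewrite nth_default //; apply: leq_trans sq _; lia.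
Qed.

Lemma revpM N1 N2 p q : (0 < N1)%N -> (size p <= N1)%N -> (size q <= N2)%N ->
  revp (N1 + N2).-1 (p * q) = revp N1 p * revp N2 q.
Proof.
move=> N1p sp sq.
rewrite -{1}(take_poly_id sp) /take_poly poly_def mulr_suml.
rewrite (big_morph _ (revpD _) (revp0 _)).
under eq_bigr do rewrite -scalerAl revpZ (revp_XnM (ltn_ord _) sq) scalerAl.
rewrite -mulr_suml; congr (_ * _); apply/polyP=> j.
rewrite coef_revp coef_sum; under eq_bigr do rewrite coefZ coefXn.
case: ifP => jN; last first.
  by rewrite big1 // => i _; rewrite (_ : (j == _) = false) ?mulr0 //; apply/negbTE/eqP; lia.
have hk : (N1.-1 - j < N1)%N by lia.
rewrite (bigD1 (Ordinal hk)) //= (_ : (j == _) = true); last by apply/eqP; lia.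
rewrite mulr1 big1 ?addr0 //.
move=> i /eqP hi; rewrite (_ : (j == _) = false) ?mulr0 //; apply/negbTE/eqP => hj.
by apply: hi; apply: val_inj => /=; have := ltn_ord i; lia.
Qed.

Lemma revp_exp N k p : (size p <= N.+1)%N ->
  revp (N * k).+1 (p ^+ k) = revp N.+1 p ^+ k.
Proof.
move=> sp; elim: k => [|k IH].
  by rewrite muln0 !expr0; apply/polyP => j; rewrite coef_revp coefC coef1; case: j.
have sk : (size (p ^+ k) <= (N * k).+1)%N.
  apply: leq_trans (size_poly_exp_leq _ _) _.
  by rewrite ltnS leq_mul2r; apply/orP; right; lia.
have -> : (N * k.+1).+1 = (N.+1 + (N * k).+1).-1 by lia.
by rewrite exprS (revpM _ sp sk) // IH exprS.
Qed.

Lemma revp1 N : revp N.+1 1 = 'X^N.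
Proof.
apply/polyP=> j; rewrite coef_revp coef1 coefXn.
case: ltnP => hj; first by congr (_%:R); apply/eqP/eqP; lia.
by rewrite (_ : (j == N) = false) //; apply/negbTE/eqP; lia.
Qed.

Lemma revp_XnsubC n (c : R) : revp n.+1 ('X^n - c%:P) = 1 - c *: 'X^n.
Proof.
apply/polyP=> j; rewrite coef_revp !coefB coefXn coefC coef1 coefZ coefXn.
case: ltnP => hj.
  have -> : ((n - j)%N == n) = (j == 0%N) by apply/eqP/eqP; lia.
  have -> : ((n - j)%N == 0%N) = (j == n) by apply/eqP/eqP; lia.
  by case: (j == n); case: (j == 0%N); rewrite ?mulr1 ?mulr0.
rewrite (_ : (j == 0%N) = false); last by apply/negbTE/eqP; lia.
by rewrite (_ : (j == n) = false) ?mulr0 ?subrr //; apply/negbTE/eqP; lia.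
Qed.
End Reversal.

Lemma dvdp_revp (F : fieldType) (P H : {poly F}) N : (size H <= N)%N ->
  P %| H -> revp (size P) P %| revp N H.
Proof.
move=> sH /dvdpP [z ez].
have [z0|zn0] := eqVneq z 0; first by rewrite ez z0 mul0r revp0 dvdp0.
have [P0|Pn0] := eqVneq P 0; first by rewrite ez P0 mulr0 !revp0 dvdpp.
have szP : size H = (size z + size P).-1 by rewrite ez size_mul.
have zp : (0 < size z)%N by rewrite size_poly_gt0.
have Pp : (0 < size P)%N by rewrite size_poly_gt0.
have sz : (size z <= N.+1 - size P)%N /\ N = ((N.+1 - size P) + size P).-1.
  by move: sH; rewrite szP; move: (size z) (size P) zp Pp => x y; lia.
case: sz => sz ->; rewrite ez (revpM _ sz (leqnn _)); first exact: dvdp_mull.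
by move: sz; lia.
Qed.

Section DualComponents.
Variable F : fieldType.
Notation D := (dualnum F).
Implicit Types (x y : D) (h : {poly D}).

Definition dfst x : F := x.1.
Definition dsnd x : F := x.2.

Fact dfst_is_nmod_morphism : nmod_morphism dfst. Proof. by []. Qed.
HB.instance Definition _ := GRing.isNmodMorphism.Build D F dfst dfst_is_nmod_morphism.
Fact dfst_is_monoid_morphism : monoid_morphism dfst. Proof. by []. Qed.
HB.instance Definition _ := GRing.isMonoidMorphism.Build D F dfst dfst_is_monoid_morphism.
Fact dsnd_is_nmod_morphism : nmod_morphism dsnd. Proof. by []. Qed.
HB.instance Definition _ := GRing.isNmodMorphism.Build D F dsnd dsnd_is_nmod_morphism.

Lemma dsnd_sum (I : Type) (r : seq I) (P : pred I) (G : I -> D) :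
  dsnd (\sum_(i <- r | P i) G i) = \sum_(i <- r | P i) dsnd (G i).
Proof. exact: raddf_sum. Qed.

Lemma dsndM x y : dsnd (x * y) = dfst x * dsnd y + dsnd x * dfst y.
Proof. by []. Qed.

Lemma dual_eq x y : dfst x = dfst y -> dsnd x = dsnd y -> x = y.
Proof. by case: x y => [a b] [c d] /= -> ->. Qed.

Lemma dual_eq0 x : (x == 0) = (dfst x == 0) && (dsnd x == 0).
Proof. by case: x. Qed.

Lemma dn_invE (a b : F) x :
  a != 0 -> dn a b * x = 1 -> x = dn a^-1 (- (b / a ^+ 2)).
Proof.
case: x => x0 x1 an0 /(congr1 (fun y : D => (y.1, y.2))) [ax0 e1].
have x0E : x0 = a^-1 by rewrite -[x0](mulKf an0) ax0 mulr1.
congr pair => //; apply: (mulfI an0); move/eqP: e1; rewrite addr_eq0 => /eqP ->.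
by rewrite x0E; field.
Qed.

Lemma map_poly_dual_eq h1 h2 :
  map_poly dfst h1 = map_poly dfst h2 -> map_poly dsnd h1 = map_poly dsnd h2 -> h1 = h2.
Proof.
move=> e1 e2; apply/polyP=> k; apply: dual_eq.
  by have := congr1 (fun q : {poly F} => q`_k) e1; rewrite /= !coef_map.
by have := congr1 (fun q : {poly F} => q`_k) e2; rewrite /= !coef_map.
Qed.

Lemma map_dsndD h1 h2 :
  map_poly dsnd (h1 + h2) = map_poly dsnd h1 + map_poly dsnd h2.
Proof. exact: raddfD. Qed.

Lemma map_dsndB h1 h2 :
  map_poly dsnd (h1 - h2) = map_poly dsnd h1 - map_poly dsnd h2.
Proof. exact: raddfB. Qed.

Lemma map_dsndM h1 h2 :
  map_poly dsnd (h1 * h2) =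
  map_poly dfst h1 * map_poly dsnd h2 + map_poly dsnd h1 * map_poly dfst h2.
Proof.
apply/polyP=> k; rewrite coefD coef_map !coefM raddf_sum -big_split /=.
by apply: eq_bigr => i _; rewrite !coef_map.
Qed.

Lemma map_dsndXn k : map_poly dsnd 'X^k = 0.
Proof. by apply/polyP=> j; rewrite coef_map coefXn coef0 raddfMn /= mul0rn. Qed.

Lemma map_dfst_dconst (E : {poly F}) : map_poly dfst (map_poly (@dconst F) E) = E.
Proof. by apply/polyP=> j; rewrite !coef_map_id0. Qed.

Lemma map_dsnd_dconst (E : {poly F}) : map_poly dsnd (map_poly (@dconst F) E) = 0.
Proof. by apply/polyP=> j; rewrite coef_map_id0 // coef_map_id0 // coef0. Qed.

Definition word_fst n (w : 'rV[D]_n) : {poly F} := map_poly dfst (word_poly w).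
Definition word_snd n (w : 'rV[D]_n) : {poly F} := map_poly dsnd (word_poly w).

(* Modulo [x^n - (a + b u)] one has [u = b^-1 (x^n - a)], so a word [c0 + u c1]
   is the polynomial [c0 + b^-1 (x^n - a) c1] of [F[x]/((x^n - a)^2)]. *)
Lemma constacyclic_idealP n (a b : F) (E : {poly F}) (w : 'rV[D]_n) :
  b != 0 -> E %| ('X^n - a%:P) ^+ 2 ->
  constacyclic_ideal (dn a b) (map_poly (@dconst F) E) w <->
  E %| word_fst w + b^-1 *: (('X^n - a%:P) * word_snd w).
Proof.
set T := 'X^n - a%:P => bn0 ET.
have bVb : b^-1%:P * b%:P = 1 :> {poly F} by rewrite -polyCM mulVf.
split=> [[f [h eq]] | /dvdpP [q eq]].
  have e0 := congr1 (map_poly dfst) eq; have e1 := congr1 (map_poly dsnd) eq.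
  rewrite /= rmorphD !rmorphM rmorphB /= map_polyXn map_polyC map_dfst_dconst in e0.
  rewrite /= map_dsndD !map_dsndM map_dsndB map_dsndXn rmorphB /= map_polyXn
    !map_polyC map_dfst_dconst map_dsnd_dconst in e1.
  rewrite /word_fst /word_snd e0 e1 /= -/T.
  set f0 := map_poly dfst f; set f1 := map_poly dsnd f.
  set h0 := map_poly dfst h; set h1 := map_poly dsnd h.
  have -> : f0 * E + h0 * T + b^-1 *: (T * (f0 * 0 + f1 * E + (h0 * (0 - b%:P) + h1 * T)))
            = E * (f0 + b^-1 *: (T * f1)) + T ^+ 2 * (b^-1 *: h1).
    rewrite -!mul_polyC; apply/eqP; rewrite -subr_eq0; apply/eqP.
    transitivity (h0 * T * (1 - b^-1%:P * b%:P)); first by ring.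
    by rewrite bVb subrr mulr0.
  by apply: dvdp_add; [exact: dvdp_mulIl | exact: dvdp_mulr].
exists (map_poly (@dconst F) q), (map_poly (@dconst F) (- b^-1 *: word_snd w)).
apply: map_poly_dual_eq.
  rewrite rmorphD !rmorphM rmorphB /= map_polyXn map_polyC !map_dfst_dconst /= -/T.
  rewrite -[map_poly dfst _](addrK (b^-1 *: (T * word_snd w))) eq.
  by rewrite -!mul_polyC polyCN; ring.
rewrite map_dsndD !map_dsndM map_dsndB map_dsndXn rmorphB /= map_polyXn
        !map_polyC !map_dfst_dconst !map_dsnd_dconst /= -/T.
apply/eqP; rewrite -subr_eq0 -!mul_polyC polyCN; apply/eqP.
transitivity (word_snd w * (1 - b^-1%:P * b%:P)); first by ring.
by rewrite bVb subrr mulr0.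
Qed.
End DualComponents.

Section Words.
Variables (F : fieldType) (n : nat).
Notation D := (dualnum F).
Implicit Types (w a c : 'rV[D]_n).

Lemma size_sum_coefXn (e : 'I_n -> F) : (size (\sum_(k < n) e k *: 'X^k)%R <= n)%N.
Proof.
apply: (big_ind (fun p : {poly F} => (size p <= n)%N)) => [|p q|k _].
- by rewrite size_poly0.
- exact: size_polyD_le.
- by rewrite (leq_trans (size_scale_leq _ _)) // size_polyXn.
Qed.

Lemma coef_sum_coefXn (e : 'I_n -> F) (i : 'I_n) : (\sum_(k < n) e k *: 'X^k)`_i = e i.
Proof.
rewrite coef_sum (bigD1 i) //= coefZ coefXn eqxx mulr1 big1 ?addr0 // => k ki.
by rewrite coefZ coefXn (_ : (i == k :> nat) = false) ?mulr0 //; apply/negbTE; rewrite eq_sym.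
Qed.

Lemma word_fstE w : word_fst w = \sum_(k < n) dfst (w 0 k) *: 'X^k.
Proof.
rewrite /word_fst rmorph_sum; apply: eq_bigr => k _.
by rewrite -mul_polyC rmorphM /= map_polyC map_polyXn mul_polyC.
Qed.

Lemma word_sndE w : word_snd w = \sum_(k < n) dsnd (w 0 k) *: 'X^k.
Proof.
apply/polyP=> j; rewrite coef_map !coef_sum raddf_sum; apply: eq_bigr => k _.
by rewrite !coefZ !coefXn; case: eqP; rewrite ?mulr1 ?mulr0.
Qed.

Lemma size_word_fst w : (size (word_fst w) <= n)%N.
Proof. by rewrite word_fstE size_sum_coefXn. Qed.

Lemma size_word_snd w : (size (word_snd w) <= n)%N.
Proof. by rewrite word_sndE size_sum_coefXn. Qed.

Lemma coef_word_fst w (i : 'I_n) : (word_fst w)`_i = dfst (w 0 i).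
Proof. by rewrite word_fstE coef_sum_coefXn. Qed.

Lemma coef_word_snd w (i : 'I_n) : (word_snd w)`_i = dsnd (w 0 i).
Proof. by rewrite word_sndE coef_sum_coefXn. Qed.

Definition word_of (c0 c1 : {poly F}) : 'rV[D]_n := \row_(k < n) dn c0`_k c1`_k.

Lemma sum_coefXn (q : {poly F}) : (size q <= n)%N -> \sum_(k < n) q`_k *: 'X^k = q.
Proof. by move=> sq; rewrite -poly_def -/(take_poly n q) take_poly_id. Qed.

Lemma word_fst_of (c0 c1 : {poly F}) : (size c0 <= n)%N -> word_fst (word_of c0 c1) = c0.
Proof.
by move=> s; rewrite word_fstE -[RHS](sum_coefXn s); apply: eq_bigr => k _; rewrite mxE.
Qed.

Lemma word_snd_of (c0 c1 : {poly F}) : (size c1 <= n)%N -> word_snd (word_of c0 c1) = c1.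
Proof.
by move=> s; rewrite word_sndE -[RHS](sum_coefXn s); apply: eq_bigr => k _; rewrite mxE.
Qed.

End Words.

Lemma dfst_inner (F : fieldType) n (a c : 'rV[dualnum F]_n) : (0 < n)%N ->
  dfst (\sum_(k < n) a 0 k * c 0 k) = (word_fst c * revp n (word_fst a))`_n.-1.
Proof.
case: n a c => [|m] // a c _; rewrite rmorph_sum coefM; apply: eq_bigr => i _.
rewrite rmorphM coef_revp ifT ?ltnS ?leq_subr //=.
have -> : (m - (m - i))%N = i by move: (ltn_ord i); lia.
by rewrite !coef_word_fst mulrC.
Qed.

Lemma dsnd_inner (F : fieldType) n (a c : 'rV[dualnum F]_n) : (0 < n)%N ->
  dsnd (\sum_(k < n) a 0 k * c 0 k) =
  (word_fst c * revp n (word_snd a) + word_snd c * revp n (word_fst a))`_n.-1.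
Proof.
case: n a c => [|m] // a c _; rewrite dsnd_sum coefD !coefM -big_split.
apply: eq_bigr => i _; rewrite dsndM !coef_revp ltnS leq_subr /=.
have -> : (m - (m - i))%N = i by move: (ltn_ord i); lia.
by rewrite !coef_word_fst !coef_word_snd addrC mulrC [dsnd _ * _]mulrC.
Qed.


Section OrthogonalityCoefficients.
Variables (F : fieldType) (n : nat) (alpha b : F).
Hypothesis n_gt0 : (0 < n)%N.
Local Notation T := ('X^n - alpha%:P : {poly F}).

Lemma size_T : size T = n.+1.
Proof. exact: size_XnsubC. Qed.

Lemma T_neq0 : T != 0.
Proof. by rewrite -size_poly_gt0 size_T. Qed.

Lemma size_Tsqr : size (T ^+ 2) = (2 * n).+1.
Proof. by rewrite expr2 size_mul ?T_neq0 // size_T; lia. Qed.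

Lemma coef_pred_mulT (Z : {poly F}) : (size Z <= n.-1)%N -> (Z * T)`_n.-1 = 0.
Proof.
move=> sZ; rewrite mulrBr coefB coefMXn coefMC ifT; last by lia.
by rewrite nth_default ?mul0r ?subr0.
Qed.

Lemma size_divpT (V : {poly F}) m : (size V <= m + n)%N -> (size (V %/ T)%R <= m)%N.
Proof. by move=> sV; rewrite size_divp ?T_neq0 // size_T leq_subLR addnC. Qed.

Lemma coef_pred_dvdT (V : {poly F}) : (size V <= (2 * n).-1)%N -> T %| V -> V`_n.-1 = 0.
Proof.
move=> sV /divpK <-; apply: coef_pred_mulT; apply: size_divpT; lia.
Qed.

Lemma sqrT_decomp (G : {poly F}) : b != 0 -> (size G <= 2 * n)%N ->
  exists c0 c1 : {poly F},
    [/\ (size c0 <= n)%N, (size c1 <= n)%N & G = c0 + b%:P * (T * c1)].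
Proof.
move=> b_neq0 sG; exists (G %% T), (b^-1%:P * (G %/ T)); split.
- by rewrite -ltnS -size_T ltn_modp T_neq0.
- by rewrite mul_polyC (leq_trans (size_scale_leq _ _)) // size_divpT //; lia.
- by rewrite mulrCA [b%:P * _]mulrA -polyCM mulfV // mul1r mulrC addrC -divp_eq.
Qed.

Lemma size_mul_le2n (p q : {poly F}) :
  (size p <= n)%N -> (size q <= n)%N -> (size (p * q)%R <= (2 * n).-1)%N.
Proof. by move=> sp sq; rewrite mul2n -addnn size_mul_le. Qed.

Definition orth_poly (r0 r1 : {poly F}) : {poly F} :=
  alpha%:P * r0 + T * (r0 + (alpha * b)%:P * r1).

Lemma mul_orth_poly (c0 c1 r0 r1 : {poly F}) :
  (c0 + b%:P * (T * c1)) * orth_poly r0 r1 =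
  alpha%:P * (c0 * r0) + T * (c0 * r0 + (alpha * b)%:P * (c0 * r1 + c1 * r0))
  + T ^+ 2 * (b%:P * c1 * (r0 + (alpha * b)%:P * r1)).
Proof. by rewrite /orth_poly polyCM; ring. Qed.

Lemma orth_coefs_eq0 (c0 c1 r0 r1 : {poly F}) : alpha != 0 -> b != 0 ->
  (size c0 <= n)%N -> (size c1 <= n)%N -> (size r0 <= n)%N -> (size r1 <= n)%N ->
  T ^+ 2 %| (c0 + b%:P * (T * c1)) * orth_poly r0 r1 ->
  (c0 * r0)`_n.-1 = 0 /\ (c0 * r1 + c1 * r0)`_n.-1 = 0.
Proof.
move=> alpha_neq0 b_neq0 sc0 sc1 sr0 sr1; rewrite mul_orth_poly.
set X0 := c0 * r0; set X1 := c0 * r1 + c1 * r0.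
have sX0 : (size X0 <= (2 * n).-1)%N by exact: size_mul_le2n.
have sX1 : (size X1 <= (2 * n).-1)%N by rewrite size_polyD_le ?size_mul_le2n.
rewrite dvdp_addl ?dvdp_mulIl // => hd.
have TX0 : T %| X0.
  have := dvdp_trans (dvdp_exp2l T (isT : 1 <= 2)%N) hd.
  by rewrite expr1 dvdp_addl ?dvdp_mulIl // mul_polyC dvdpZr.
have X00 := coef_pred_dvdT sX0 TX0; split=> //.
have sY : (size (X0 %/ T)%R <= n.-1)%N by apply: size_divpT; lia.
have TY : T %| alpha%:P * (X0 %/ T) + (X0 + (alpha * b)%:P * X1).
  have eY : T * (alpha%:P * (X0 %/ T)) = alpha%:P * X0.
    by rewrite mulrCA [T * _]mulrC divpK.
  by rewrite -(dvdp_mul2l _ _ T_neq0) -expr2 mulrDr eY.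
have sTY : (size (alpha%:P * (X0 %/ T) + (X0 + (alpha * b)%:P * X1))%R <= (2 * n).-1)%N.
  rewrite !size_polyD_le ?(leq_trans (size_polyCM_le _ _)) //.
  by apply: leq_trans sY _; lia.
have := coef_pred_dvdT sTY TY.
rewrite coefD coefCM coefD coefCM X00 (nth_default _ sY) mulr0 !add0r => /eqP.
by rewrite !mulf_eq0 (negbTE alpha_neq0) (negbTE b_neq0) => /eqP.
Qed.

Lemma mul_orth_poly_reduce (c0 c1 r0 r1 : {poly F}) :
  (size c0 <= n)%N -> (size c1 <= n)%N -> (size r0 <= n)%N -> (size r1 <= n)%N ->
  (c0 * r0)`_n.-1 = 0 -> (c0 * r1 + c1 * r0)`_n.-1 = 0 ->
  exists2 V : {poly F}, (size V < 2 * n)%N &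
    T ^+ 2 %| (c0 + b%:P * (T * c1)) * orth_poly r0 r1 - V.
Proof.
move=> sc0 sc1 sr0 sr1 X00 X10; rewrite mul_orth_poly.
set Q := c0 * r0 + (alpha * b)%:P * (c0 * r1 + c1 * r0).
have sQ : (size Q <= (2 * n).-1)%N.
  by rewrite !size_polyD_le ?(leq_trans (size_polyCM_le _ _)) ?size_polyD_le ?size_mul_le2n.
have Q0 : Q`_n.-1 = 0 by rewrite coefD coefCM X00 X10 mulr0 addr0.
have sq : (size (Q %/ T)%R <= n.-1)%N by apply: size_divpT; lia.
have sr : (size (Q %% T)%R <= n.-1)%N.
  apply: size_le_pred; first by rewrite -ltnS -size_T ltn_modp T_neq0.
  by move: Q0; rewrite {1}(divp_eq Q T) coefD coef_pred_mulT // add0r.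
exists (alpha%:P * (c0 * r0) + T * (Q %% T)).
  suff : (size (alpha%:P * (c0 * r0) + T * (Q %% T))%R <= (2 * n).-1)%N by lia.
  apply: size_polyD_le.
  - by rewrite (leq_trans (size_polyCM_le _ _)) ?size_mul_le2n.
  - by apply: leq_trans (size_mul_le (eq_leq size_T) sr) _; lia.
apply/dvdpP; exists (Q %/ T + b%:P * c1 * (r0 + (alpha * b)%:P * r1)).
by rewrite {1}(divp_eq Q T); ring.
Qed.

(* Otherwise the remainder [W] of [E * orth_poly r0 r1] modulo [T^2] is nonzero;
   [x^k E] with [k = 2n - size W], reduced modulo [T^2], is a codeword [c] with
   [c * orth_poly r0 r1 = x^k W] of degree exactly [2n - 1] modulo [T^2], while
   [mul_orth_poly_reduce] gives a representative of smaller degree. *)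
Lemma dvdp_orth_poly (E E' r0 r1 : {poly F}) : b != 0 ->
  E * E' = T ^+ 2 -> (size r0 <= n)%N -> (size r1 <= n)%N ->
  (forall c0 c1 : {poly F}, (size c0 <= n)%N -> (size c1 <= n)%N ->
     E %| c0 + b%:P * (T * c1) ->
     (c0 * r0)`_n.-1 = 0 /\ (c0 * r1 + c1 * r0)`_n.-1 = 0) ->
  E' %| orth_poly r0 r1.
Proof.
move=> b_neq0 eE sr0 sr1 orthE; set K := orth_poly r0 r1; apply: contraT => nEK.
have T2n0 : T ^+ 2 != 0 by rewrite -size_poly_gt0 size_Tsqr.
have En0 : E != 0 by apply: contraNneq T2n0 => E0; rewrite -eE E0 mul0r.
set W := (E * K) %% T ^+ 2.
have Wn0 : W != 0.
  by apply: contraNneq nEK => /modp_eq0P; rewrite -eE dvdp_mul2l.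
have sW : (size W <= 2 * n)%N by rewrite -ltnS -size_Tsqr ltn_modp.
set k := (2 * n - size W)%N; set G := ('X^k * E) %% T ^+ 2.
have sG : (size G <= 2 * n)%N by rewrite -ltnS -size_Tsqr ltn_modp.
have [c0 [c1 [sc0 sc1 eG]]] := sqrT_decomp b_neq0 sG.
have EG : E %| c0 + b%:P * (T * c1).
  by rewrite -eG -dvdp_mod ?dvdp_mulIr // -eE dvdp_mulIl.
have [X00 X10] := orthE c0 c1 sc0 sc1 EG.
have [V sV dV] := mul_orth_poly_reduce sc0 sc1 sr0 sr1 X00 X10.
rewrite -eG -/K in dV.
have : T ^+ 2 %| 'X^k * W - V.
  have -> : 'X^k * W - V = 'X^k * (W - E * K) + ('X^k * E - G) * K + (G * K - V) by ring.
  apply: dvdp_add; first apply: dvdp_add; last exact: dV.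
    by apply: dvdp_mull; rewrite dvdp_modpB.
  by apply: dvdp_mulr; rewrite -dvdpNr opprB dvdp_modpB.
by rewrite (negbTE (Xn_subp_ndvdp size_Tsqr Wn0 sW sV)).
Qed.
End OrthogonalityCoefficients.

Section Duality.
Variables (F : fieldType) (n : nat) (alpha beta : F).
Hypotheses (n_gt0 : (0 < n)%N) (alpha_neq0 : alpha != 0) (beta_neq0 : beta != 0).
Local Notation T := ('X^n - alpha%:P : {poly F}).
Local Notation D := (dualnum F).

Lemma dual_code_dvdP (E E' : {poly F}) (a : 'rV[D]_n) :
  E * E' = T ^+ 2 ->
  dual_code (constacyclic_ideal (dn alpha beta) (map_poly (@dconst F) E)) a <->
  E' %| orth_poly n alpha beta^-1 (revp n (word_fst a)) (revp n (word_snd a)).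
Proof.
move=> eE; have ET : E %| T ^+ 2 by rewrite -eE dvdp_mulIl.
split=> [orth_a | dvd_a c].
  apply: (dvdp_orth_poly n_gt0 (invr_neq0 beta_neq0) eE);
    rewrite ?size_revp // => c0 c1 sc0 sc1 Ec.
  have : constacyclic_ideal (dn alpha beta) (map_poly (@dconst F) E) (word_of n c0 c1).
    by apply/constacyclic_idealP; rewrite // word_fst_of // word_snd_of // -mul_polyC.
  move=> /orth_a /eqP; rewrite dual_eq0 => /andP[/eqP h0 /eqP h1].
  by rewrite dfst_inner // dsnd_inner // word_fst_of // word_snd_of // in h0 h1.
move=> /(constacyclic_idealP _ beta_neq0 ET); rewrite -mul_polyC => Ec.
have := dvdp_mul Ec dvd_a; rewrite eE.
move=> /(orth_coefs_eq0 n_gt0 alpha_neq0 (invr_neq0 beta_neq0) (size_word_fst c)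
          (size_word_snd c) (size_revp _ _) (size_revp _ _)) [h0 h1].
by apply/eqP; rewrite dual_eq0 dfst_inner // dsnd_inner // h0 h1 eqxx.
Qed.

Lemma revp_dual_word (a0 a1 : {poly F}) : (size a0 <= n)%N -> (size a1 <= n)%N ->
  revp (2 * n) (a0 + (- (alpha ^+ 2 / beta)) *: (('X^n - alpha^-1%:P) * a1)) =
  orth_poly n alpha beta^-1 (revp n a0) (revp n a1).
Proof.
move=> sa0 sa1; rewrite mul2n -addnn -[(n + n)%N]/(n.+1 + n).-1.
have s1 : (size (1%R : {poly F}) <= n.+1)%N by rewrite size_poly1.
rewrite revpD revpZ -{1}(mul1r a0) !revpM ?size_XnsubC // revp1 revp_XnsubC.
rewrite /orth_poly -!mul_polyC polyCN !polyCM; apply/eqP; rewrite -subr_eq0; apply/eqP.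
transitivity (alpha%:P * beta^-1%:P * 'X^n * revp n a1 * (alpha%:P * alpha^-1%:P - 1)).
  by ring.
have -> : alpha%:P * alpha^-1%:P = 1 :> {poly F} by rewrite -polyCM mulfV.
by rewrite subrr mulr0.
Qed.

Lemma revp_sqrXnsubC : revp (2 * n).+1 (T ^+ 2) = alpha ^+ 2 *: ('X^n - alpha^-1%:P) ^+ 2.
Proof.
rewrite mulnC revp_exp ?size_XnsubC // revp_XnsubC -exprZn -sqrrN opprB.
by rewrite scalerBr scale_polyC mulfV.
Qed.

Theorem dual_constacyclic_ideal (E E' Es : {poly F}) (lam_inv : D) :
  dn alpha beta * lam_inv = 1 -> E * E' = T ^+ 2 ->
  Es %| revp (size E') E' -> E' %| revp (size Es) Es ->
  forall c : 'rV[D]_n,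
    dual_code (constacyclic_ideal (dn alpha beta) (map_poly (@dconst F) E)) c <->
    constacyclic_ideal lam_inv (map_poly (@dconst F) Es) c.
Proof.
move=> inv_lam eE EsE' E'Es c.
rewrite (dn_invE alpha_neq0 inv_lam); set T' := 'X^n - alpha^-1%:P.
have l1_neq0 : - (beta / alpha ^+ 2) != 0.
  by rewrite oppr_eq0 mulf_neq0 ?invr_eq0 ?expf_neq0.
have EsT' : Es %| T' ^+ 2.
  have E'T : E' %| T ^+ 2 by rewrite -eE dvdp_mulIr.
  have := dvdp_trans EsE' (dvdp_revp (eq_leq (size_Tsqr _ n_gt0)) E'T).
  by rewrite revp_sqrXnsubC dvdpZr ?expf_neq0.
rewrite (dual_code_dvdP _ eE) (constacyclic_idealP _ l1_neq0 EsT') invrN invf_div.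
rewrite -(revp_dual_word (size_word_fst c) (size_word_snd c)).
set H := _ + _ *: _.
have sH : (size H <= 2 * n)%N.
  apply: size_polyD_le; first by apply: leq_trans (size_word_fst c) _; lia.
  apply: leq_trans (size_scale_leq _ _) _.
  apply: leq_trans (size_mul_le (eq_leq (size_XnsubC _ n_gt0)) (size_word_snd c)) _.
  by rewrite addSn mul2n addnn.
split=> [/(dvdp_revp (size_revp _ _)) | /(dvdp_revp sH)].
  by rewrite revpK // => /(dvdp_trans EsE').
exact: dvdp_trans.
Qed.
End Duality.

Lemma pchar_odd_natr2_neq0 (R : idomainType) p :
  p \in [pchar R] -> odd p -> 2%:R != 0 :> R.
Proof.
move=> pc pO; rewrite -(dvdn_pcharf pc); apply/negP => /dvdn_leq p_le2.
by move: pO (prime_gt1 (pcharf_prime pc)) (p_le2 isT); case: p {pc p_le2} => [|[|[]]].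
Qed.

Lemma XnsubC_exp_pchar (R : comNzRingType) p s k (z : R) : p \in [pchar R] ->
  ('X^k - z%:P) ^+ (p ^ s) = 'X^(k * p ^ s) - (z ^+ (p ^ s))%:P.
Proof.
move=> pc; have pP := pcharf_prime pc.
have pn : [pchar {poly R}].-nat (p ^ s)%N.
  rewrite (@eq_pnat _ (p : nat_pred)); first by rewrite pnatX pnat_id.
  by move=> q; rewrite pchar_poly (pcharf_eq pc).
by rewrite exprDn_pchar // exprNn_pchar // -exprM rmorphXn.
Qed.

Section QuadraticFactors.
Variable F : fieldType.

Definition quad (u v : F) : {poly F} := 'X^2 + u *: 'X + v%:P.

Definition quad_pair (u v : F) (i j : nat) : {poly F} := quad u v ^+ i * quad (- u) v ^+ j.

Lemma quad_pairE u v i j :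
  quad_pair u v i j = ('X^2 + u *: 'X + v%:P) ^+ i * ('X^2 - u *: 'X + v%:P) ^+ j.
Proof. by rewrite /quad_pair /quad scaleNr. Qed.

Lemma coef_quad u v k :
  (quad u v)`_k = if k == 0%N then v else if k == 1%N then u else if k == 2%N then 1 else 0.
Proof.
rewrite /quad !coefD coefXn coefZ coefX coefC.
by case: k => [|[|[|k]]] /=; rewrite ?mulr0 ?mulr1 ?add0r ?addr0.
Qed.

Lemma size_quad u v : size (quad u v) = 3%N.
Proof.
apply/eqP; rewrite eqn_leq; apply/andP; split.
  by apply/leq_sizeP => k hk; rewrite coef_quad; case: k hk => [|[|[|k]]].
by rewrite ltnNge; apply/negP => /leq_sizeP /(_ 2%N (leqnn _)) /eqP; rewrite coef_quad oner_eq0.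
Qed.

Lemma revp_quad u v : v != 0 -> revp 3 (quad u v) = v *: quad (u / v) v^-1.
Proof.
move=> vn0; apply/polyP=> k; rewrite coef_revp coefZ !coef_quad.
by case: k => [|[|[|k]]] //=; rewrite ?mulr0 ?mulr1 ?mulfV // mulrC mulfVK.
Qed.

Lemma size_quad_exp u v k : size (quad u v ^+ k) = (2 * k).+1.
Proof.
have sq : (0 < size (quad u v ^+ k))%N.
  by rewrite size_poly_gt0 expf_neq0 // -size_poly_gt0 size_quad.
by rewrite -(prednK sq) size_exp size_quad.
Qed.

Lemma size_quad_pair u v i j : size (quad_pair u v i j) = (2 * (i + j)).+1.
Proof.
rewrite size_mul ?size_quad_exp; first by rewrite addSn addnS mulnDr.
  by rewrite -size_poly_gt0 size_quad_exp.
by rewrite -size_poly_gt0 size_quad_exp.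
Qed.

Lemma revp_quad_pair u v i j : v != 0 ->
  revp (size (quad_pair u v i j)) (quad_pair u v i j) =
  v ^+ (i + j) *: quad_pair (u / v) v^-1 i j.
Proof.
move=> vn0; rewrite size_quad_pair.
rewrite (_ : (2 * (i + j)).+1 = ((2 * i).+1 + (2 * j).+1).-1)%N; last first.
  by rewrite addSn addnS mulnDr.
rewrite revpM ?size_quad_exp // !revp_exp ?size_quad // !revp_quad // mulNr.
by rewrite !exprZn -scalerAl -scalerAr scalerA exprD.
Qed.

Lemma dvdp_revp_quad_pair u v i j : v != 0 ->
  quad_pair (u / v) v^-1 i j %| revp (size (quad_pair u v i j)) (quad_pair u v i j).
Proof. by move=> vn0; rewrite revp_quad_pair // dvdpZr ?expf_neq0. Qed.

Lemma dvdp_revp_quad_pairV u v i j : v != 0 ->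
  quad_pair u v i j %| revp (size (quad_pair (u / v) v^-1 i j)) (quad_pair (u / v) v^-1 i j).
Proof.
by move=> vn0; have := dvdp_revp_quad_pair (u / v) i j (invr_neq0 vn0); rewrite invrK mulfVK.
Qed.

Lemma quad_pair_mul_compl u v i j M : (i <= M)%N -> (j <= M)%N ->
  quad_pair u v i j * quad_pair u v (M - i) (M - j) = (quad u v * quad (- u) v) ^+ M.
Proof.
move=> iM jM; rewrite /quad_pair exprMn.
have splitM (f : {poly F}) k : (k <= M)%N -> f ^+ M = f ^+ k * f ^+ (M - k).
  by move=> kM; rewrite -exprD subnKC.
by rewrite (splitM _ _ iM) (splitM _ _ jM); ring.
Qed.

Lemma quad_mulN u v z : v *+ 2 = u ^+ 2 -> v ^+ 2 = - z ->
  quad u v * quad (- u) v = 'X^4 - z%:P.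
Proof.
move=> h1 h2; transitivity ('X^4 + (v *+ 2 - u ^+ 2)%:P * 'X^2 + (v ^+ 2)%:P).
  by rewrite /quad -!mul_polyC polyCN rmorphB rmorphMn !rmorphXn; ring.
by rewrite h1 subrr polyC0 mul0r addr0 h2 polyCN.
Qed.
Lemma quad_mul_gamma (gamma z : F) : 2%:R != 0 :> F -> gamma ^+ 4 + 4%:R * z = 0 ->
  quad gamma (gamma ^+ 2 / 2%:R) * quad (- gamma) (gamma ^+ 2 / 2%:R) = 'X^4 - z%:P.
Proof.
move=> two_neq0 /eqP; rewrite addr_eq0 => /eqP gamma4.
apply: quad_mulN; first by field.
by rewrite expr_div_n -exprM gamma4; field; rewrite (natrM F 2 2) mulf_neq0.
Qed.
End QuadraticFactors.

Theorem theorem3p7 (p m s : nat) (F : finFieldType)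
    (alpha alpha0 gamma beta : F) (lam_inv : dualnum F) (i j : nat) :
  prime p -> odd p -> (0 < m)%N -> (0 < s)%N ->
  #|F| = (p ^ m)%N ->
  (p ^ m %% 4 = 3)%N ->
  alpha != 0 ->
  (forall y : F, y ^+ 2 != alpha) ->
  alpha0 ^+ (p ^ s) = alpha ->
  gamma ^+ 4 + 4%:R * alpha0 = 0 ->
  beta != 0 ->
  (i <= 2 * p ^ s)%N -> (j <= 2 * p ^ s)%N ->
  (dn alpha beta : dualnum F) * lam_inv = 1 ->
  forall c : 'rV[dualnum F]_(4 * p ^ s),
    dual_code
      (constacyclic_ideal (dn alpha beta)
         (map_poly (@dconst F)
            (('X^2 + gamma *: 'X + (gamma ^+ 2 / 2%:R)%:P) ^+ i
             * ('X^2 - gamma *: 'X + (gamma ^+ 2 / 2%:R)%:P) ^+ j))) c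
    <->
    constacyclic_ideal lam_inv
      (map_poly (@dconst F)
         (('X^2 + (2%:R / gamma) *: 'X + (2%:R / gamma ^+ 2)%:P) ^+ (2 * p ^ s - i)
          * ('X^2 - (2%:R / gamma) *: 'X + (2%:R / gamma ^+ 2)%:P) ^+ (2 * p ^ s - j))) c.
Proof.
move=> pP pO _ _ cardF _ alpha_neq0 _ alpha0E gamma4 beta_neq0 iN jN inv_lam.
have pc := card_finPcharP cardF pP.
have two_neq0 := pchar_odd_natr2_neq0 pc pO.
have alpha0_neq0 : alpha0 != 0.
  by apply: contraNneq alpha_neq0 => a00; rewrite -alpha0E a00 expr0n expn_eq0 eqn0Ngt prime_gt0.
have gamma_neq0 : gamma != 0.
  apply: contra_eq_neq gamma4 => ->.
  by rewrite expr0n add0r mulf_neq0 // (natrM F 2 2) mulf_neq0.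
set cc := gamma ^+ 2 / 2%:R.
have cc_neq0 : cc != 0 by rewrite mulf_neq0 ?invr_eq0 ?expf_neq0.
have -> : 2%:R / gamma = gamma / cc by rewrite /cc; field; rewrite two_neq0 gamma_neq0.
have -> : 2%:R / gamma ^+ 2 = cc^-1 by rewrite /cc; field; rewrite two_neq0 gamma_neq0.
have n_gt0 : (0 < 4 * p ^ s)%N by rewrite muln_gt0 expn_gt0 (prime_gt0 pP).
rewrite -!quad_pairE.
apply: (dual_constacyclic_ideal n_gt0 alpha_neq0 beta_neq0
         (E' := quad_pair gamma cc (2 * p ^ s - i) (2 * p ^ s - j)) inv_lam).
- rewrite quad_pair_mul_compl // (quad_mul_gamma two_neq0 gamma4) mulnC exprM.
  by rewrite XnsubC_exp_pchar // alpha0E.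
- exact: dvdp_revp_quad_pair.
- exact: dvdp_revp_quad_pairV.
Qed.
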